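(* There exist a point $x\in\{0,1\}^{\mathbb{N}}$ such that, for the full shift $(\{0,1\}^{\mathbb{N}},S)$, $V^{\log}(x)\subsetneq V(x)$.
   Context: $S$ is the left shift. For $N\ge1$ let $\mathrm{Emp}(x,N)=\frac1N\sum_{n=1}^N\delta_{S^{n-1}(x)}$, and for $N\ge2$ let $\mathrm{Emp}^{\log}(x,N)=\frac1{\log N}\sum_{n=1}^N\frac1n\delta_{S^{n-1}(x)}$. $V(x)$ (resp. $V^{\log}(x)$) is the set of Borel probability measures $\nu$ such that $\mathrm{Emp}(x,N_k)\to\nu$ (resp. $\mathrm{Emp}^{\log}(x,N_k)\to\nu$) weak-$*$ for some increasing sequence $(N_k)$. *)

From HB Require Import structures.
From mathcomp Require Import all_boot all_order all_algebra.
From mathcomp Require Import all_classical all_reals all_analysis.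
Set Implicit Arguments. Unset Strict Implicit. Unset Printing Implicit Defensive.
Import Order.TTheory GRing.Theory Num.Theory.
Import numFieldTopology.Exports.
Local Open Scope classical_set_scope.
Local Open Scope ring_scope.

(* The full shift {0,1}^N with its product topology (cantor_space), equipped
   with its Borel sigma-algebra (generated by the open sets). *)
Definition Omega : Type := g_sigma_algebraType (@open cantor_space).

Definition shift (x : cantor_space) : cantor_space := fun k => x k.+1.
Definition shiftn (n : nat) (x : cantor_space) : cantor_space := iter n shift x.

Definition Prob (R : realType) := probability Omega R.

(* Integral of a test function against Emp(x,N) = 1/N sum_{n=1}^N delta_{S^{n-1} x}. *)
Definition emp_int (R : realType) (x : cantor_space) (N : nat)
  (f : cantor_space -> R) : R :=
  N%:R^-1 * \sum_(n < N) f (shiftn n x).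

(* Integral of a test function against
   Emp^log(x,N) = 1/log N sum_{n=1}^N 1/n delta_{S^{n-1} x}. *)
Definition emp_log_int (R : realType) (x : cantor_space) (N : nat)
  (f : cantor_space -> R) : R :=
  (ln N%:R)^-1 * \sum_(n < N) (n.+1%:R^-1 * f (shiftn n x)).

(* Weak-* convergence of a sequence of measures (given through its integrals
   I k f = int f d mu_k) to nu : for every continuous f, int f dmu_k -> int f dnu. *)
Definition weak_star_cvg (R : realType) (I : nat -> (cantor_space -> R) -> R)
  (nu : Prob R) : Prop :=
  forall f : cantor_space -> R, continuous f ->
    ((fun k => (I k f)%:E) @ \oo --> (\int[nu]_(w in [set: Omega]) (f w)%:E)%E).

Definition V (R : realType) (x : cantor_space) : set (Prob R) :=
  [set nu | exists N : nat -> nat,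
     {homo N : m n / (m < n)%N} /\ (1 <= N 0)%N /\
     weak_star_cvg (fun k => emp_int x (N k)) nu].

Definition Vlog (R : realType) (x : cantor_space) : set (Prob R) :=
  [set nu | exists N : nat -> nat,
     {homo N : m n / (m < n)%N} /\ (2 <= N 0)%N /\
     weak_star_cvg (fun k => emp_log_int x (N k)) nu].

(* The point is the indicator x of the blocks [a_j, j a_j), a_j = 2^(j^3).
   Averages of f along the orbit of x with weights w_n (Cesaro: 1, logarithmic:
   1/(n+1)) converge to f(b^oo) as soon as the weighted proportion of indices
   with x_n <> b tends to 0, because a continuous f is almost constant on a
   long enough cylinder around b^oo.  Below a_(k+1) the ones occupy fewer than
   k a_k <= a_(k+1)/(k+1) places, and below (k+1) a_(k+1) the zeros occupy at
   most a_(k+1) places: along these two times the Cesaro averages converge to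
   the Dirac masses at 0^oo and 1^oo.  The logarithmic weight of all the ones
   below a_(J+1) is at most sum_(j <= J) j a_j / a_j <= J (J+1), negligible
   against log a_J = J^3 log 2, so the logarithmic averages converge to the
   Dirac mass at 0^oo along the whole sequence.  Hence every element of
   V^log(x) is that Dirac mass, which lies in V(x), whereas the Dirac mass at
   1^oo lies in V(x) \ V^log(x). *)

From Pilot Require Import Defs.
From HB Require Import structures.
From mathcomp Require Import all_boot all_order all_algebra.
From mathcomp Require Import all_classical all_reals all_analysis.
From mathcomp Require Import zify ring lra.
Set Implicit Arguments. Unset Strict Implicit. Unset Printing Implicit Defensive.
Import Order.TTheory GRing.Theory Num.Theory.
Import numFieldTopology.Exports.
Local Open Scope classical_set_scope.
Local Open Scope ring_scope.

Lemma shiftnE n (y : cantor_space) i : shiftn n y i = y (i + n)%N.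
Proof.
elim: n i => [|n IH] i; first by rewrite addn0.
by rewrite /shiftn iterS -/(shiftn n y) /Defs.shift IH addSnnS.
Qed.

Lemma continuous_prefix_close (R : realType) (f : cantor_space -> R)
    (p : cantor_space) (e : R) : continuous f -> 0 < e ->
  exists m, forall y : cantor_space,
    (forall i, (i < m)%N -> y i = p i) -> `|f y - f p| < e.
Proof.
(* Otherwise witnesses y_m tend to p while f (y_m) stays e away from f p. *)
move=> cf e0; apply/not_existsP => far.
have /choice[y yP] : forall m, exists y : cantor_space,
    (forall i, (i < m)%N -> y i = p i) /\ ~ `|f y - f p| < e.
  by move=> m; have /existsNP[y /not_implyP] := far m; exists y.
have y_cvg : y @ \oo --> p.
  apply/cvg_sup => i U [V] [[W] oW <-] WpI VU.
  apply: (filterS VU); exists i.+1 => // m /= im.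
  by rewrite /= (proj1 (yP m)).
have := cvg_trans (cvg_app f y_cvg) (cf p).
move/cvgrPdist_lt => /(_ e e0) [M _ fyM].
by case: (yP M) => _; rewrite distrC; apply; apply: fyM => /=.
Qed.

Lemma continuous_bounded (R : realType) (f : cantor_space -> R) :
  continuous f -> exists B, forall y, `|f y| <= B.
Proof.
move=> cf; have fK : compact (f @` [set: cantor_space]).
  apply: continuous_compact; last exact: cantor_space_compact.
  exact/continuous_subspaceT.
have [M [Mreal fM]] := compact_bounded fK.
exists (`|M| + 1) => y; apply: fM; last by exists y.
by rewrite (le_lt_trans (real_ler_norm Mreal)) // ltrDl.
Qed.

Lemma continuous_measurable (R : realType) (f : Omega -> R) :
  continuous (f : cantor_space -> R) -> measurable_fun [set: Omega] f.
Proof.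
move=> /continuousP cf.
apply: (measurability _ (measurable_realfun.RGenOpens.measurableE R)).
move=> _ [_ [a [b ->] <-]]; rewrite setTI.
by apply: sub_sigma_algebra; apply: cf; exact: interval_open.
Qed.

Lemma integral_dirac_continuous (R : realType) (f : cantor_space -> R) (p : Omega) :
  continuous f -> (\int[\d_p]_(w in [set: Omega]) (f w)%:E = (f p)%:E)%E.
Proof.
move=> cf; rewrite integral_dirac ?diracT ?mul1e //.
by apply/measurable_realfun.measurable_EFinP; apply: continuous_measurable.
Qed.

Lemma cvg_EFin_seq (R : realType) (u : nat -> R) (l : R) :
  u @ \oo --> l -> (u k)%:E @[k --> \oo] --> l%:E.
Proof. by move=> u_cvg; apply: cvg_EFin; [exact: nearW | exact: u_cvg]. Qed.

Lemma increasing_cvgn (N : nat -> nat) :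
  {homo N : m n / (m < n)%N} -> N @ \oo --> \oo.
Proof.
move=> N_incr.
have k_le k : (k <= N k)%N.
  by elim: k => // k IH; apply: leq_ltn_trans IH (N_incr _ _ (ltnSn k)).
by apply/cvgnyPge => A; exists A => // k /= Ak; apply: leq_trans Ak (k_le k).
Qed.

Lemma continuous_first_digit (R : realType) :
  continuous (fun y : cantor_space => (y 0%N : nat)%:R : R).
Proof.
have proj0 : continuous (fun y : cantor_space => y 0%N).
  exact: (@proj_continuous nat (fun _ => bool) 0%N).
apply/continuousP => A _.
have := proj1 (continuousP _) proj0 [set b : bool | A (b : nat)%:R].
by apply; exact: discrete_open.
Qed.

Definition dirac_prob (R : realType) (p : cantor_space) : Prob R := \d_(p : Omega).

Lemma weak_star_cvg_dirac (R : realType) (I : nat -> (cantor_space -> R) -> R)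
    (p : cantor_space) :
  (forall f, continuous f -> I k f @[k --> \oo] --> f p) ->
  weak_star_cvg I (dirac_prob R p).
Proof.
move=> I_cvg f cf; rewrite integral_dirac_continuous //.
exact/cvg_EFin_seq/I_cvg.
Qed.

Lemma sum_shift_le (R : numDomainType) (h : nat -> R) i N K :
  (forall n, 0 <= h n) -> (i + N <= K)%N ->
  \sum_(n < N) h (i + n)%N <= \sum_(n < K) h n.
Proof.
move=> h0 iNK; rewrite -(subnKC iNK) big_split_ord /= big_split_ord /=.
rewrite [_ + \sum_(_ < N) _]addrC -addrA lerDl.
by apply: addr_ge0; apply: sumr_ge0.
Qed.

Section weighted_shift_averages.
Variables (R : realType) (x : cantor_space) (w : nat -> R).
Hypothesis w_ge0 : forall n, 0 <= w n.
Hypothesis w_le1 : forall n, w n <= 1.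
(* Satisfied by the Cesaro weights 1 and the logarithmic weights 1/(n+1). *)
Hypothesis w_le_shift : forall i n, w n <= i.+1%:R * w (i + n)%N.

Definition window_mismatches (b : bool) (m n : nat) : nat :=
  \sum_(i < m) (x (i + n)%N != b).

Definition weighted_mismatches (b : bool) (N : nat) : R :=
  \sum_(n < N) w n * (x n != b)%:R.

Lemma shiftn_close_cst (f : cantor_space -> R) (b : bool) (B e : R) (m n : nat) :
  (forall y, `|f y| <= B) ->
  (forall y : cantor_space, (forall i, (i < m)%N -> y i = b) ->
     `|f y - f (cst b)| < e) ->
  `|f (shiftn n x) - f (cst b)| <= e + 2 * B * (window_mismatches b m n)%:R.
Proof.
move=> fB close.
have B0 : 0 <= B := le_trans (normr_ge0 _) (fB (cst b)).
have e0 : 0 <= e by apply/ltW/(le_lt_trans _ (close (cst b) _)).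
have [agree|] := eqVneq (window_mismatches b m n) 0%N.
  rewrite agree mulr0 addr0; apply/ltW/close => i im; rewrite shiftnE.
  have := agree; rewrite /window_mismatches (bigD1 (Ordinal im)) //=.
  by case: eqP.
rewrite -lt0n => mis_gt0.
apply: le_trans (ler_normB _ _) (ler_wpDl e0 _).
apply: le_trans (_ : _ <= 2 * B * 1) _.
  by rewrite mulr1 mulr_natl mulr2n; apply: lerD.
by rewrite ler_wpM2l ?mulr_ge0 // ler1n.
Qed.

Lemma weighted_mismatches_add_le (b : bool) (N m : nat) :
  weighted_mismatches b (N + m) <= weighted_mismatches b N + m%:R.
Proof.
rewrite /weighted_mismatches big_split_ord /= lerD2l.
apply: le_trans (_ : _ <= \sum_(j < m) (1 : R)) _; last by rewrite sumr_const card_ord.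
apply: ler_sum => j _.
by rewrite -[X in _ <= X]mulr1 ler_pM ?ler0n // lern1 leq_b1.
Qed.

Lemma sum_window_mismatches_le (b : bool) (m N : nat) :
  \sum_(n < N) w n * (window_mismatches b m n)%:R
    <= m%:R ^+ 2 * (weighted_mismatches b N + m%:R).
Proof.
(* A mismatch at j lies in at most m windows, each weighted by at most m w_j. *)
have ind_ge0 n : 0 <= w n * (x n != b)%:R by rewrite mulr_ge0.
apply: le_trans (_ : m%:R ^+ 2 * weighted_mismatches b (N + m) <= _); last first.
  by rewrite ler_wpM2l ?exprn_ge0 ?ler0n ?weighted_mismatches_add_le.
rewrite /window_mismatches; under eq_bigr do rewrite natr_sum mulr_sumr.
rewrite exchange_big /=.
apply: le_trans (_ : _ <= \sum_(i < m) m%:R * weighted_mismatches b (N + m)) _; last first.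
  by rewrite sumr_const card_ord -mulrnAl expr2 mulr_natr.
apply: ler_sum => i _.
apply: le_trans (_ : \sum_(n < N) m%:R * (w (i + n)%N * (x (i + n)%N != b)%:R) <= _).
  apply: ler_sum => n _; rewrite mulrA ler_wpM2r ?ler0n //.
  by apply: le_trans (w_le_shift i n) _; rewrite ler_wpM2r // ler_nat.
rewrite -mulr_sumr ler_wpM2l ?ler0n //.
apply: (sum_shift_le (h := fun n => w n * (x n != b)%:R)) => //.
by rewrite addnC leq_add2l ltnW.
Qed.

Lemma weighted_shift_sum_close (f : cantor_space -> R) (b : bool) (B e : R)
    (m N : nat) :
  (forall y, `|f y| <= B) ->
  (forall y : cantor_space, (forall i, (i < m)%N -> y i = b) ->
     `|f y - f (cst b)| < e) ->
  `|\sum_(n < N) w n * f (shiftn n x) - (\sum_(n < N) w n) * f (cst b)|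
    <= e * \sum_(n < N) w n
       + 2 * B * (m%:R ^+ 2 * (weighted_mismatches b N + m%:R)).
Proof.
move=> fB close.
have B0 : 0 <= B := le_trans (normr_ge0 _) (fB (cst b)).
rewrite mulr_suml -sumrB; under eq_bigr do rewrite -mulrBr.
apply: le_trans (ler_norm_sum _ _ _) _.
apply: le_trans
  (_ : _ <= \sum_(n < N) w n * (e + 2 * B * (window_mismatches b m n)%:R)) _.
  apply: ler_sum => n _; rewrite normrM ger0_norm // ler_wpM2l //.
  exact: shiftn_close_cst.
under eq_bigr do rewrite mulrDr mulrCA.
rewrite big_split /= -mulr_suml -mulr_sumr mulrC lerD2l ler_wpM2l ?mulr_ge0 //.
exact: sum_window_mismatches_le.
Qed.

Lemma weighted_shift_avg_close (f : cantor_space -> R) (b : bool) (B e Z : R)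
    (m N : nat) :
  0 < Z -> (forall y, `|f y| <= B) ->
  (forall y : cantor_space, (forall i, (i < m)%N -> y i = b) ->
     `|f y - f (cst b)| < e) ->
  `|Z^-1 * \sum_(n < N) w n * f (shiftn n x) - f (cst b)|
    <= e * (Z^-1 * \sum_(n < N) w n)
       + 2 * B * (m%:R ^+ 2 * (Z^-1 * weighted_mismatches b N + m%:R * Z^-1))
       + B * `|Z^-1 * \sum_(n < N) w n - 1|.
Proof.
move=> Z_gt0 fB close; set W := Z^-1 * \sum_(n < N) w n.
have -> : Z^-1 * \sum_(n < N) w n * f (shiftn n x) - f (cst b)
    = Z^-1 * (\sum_(n < N) w n * f (shiftn n x) - (\sum_(n < N) w n) * f (cst b))
      + (W - 1) * f (cst b) by rewrite /W; ring.
apply: le_trans (ler_normD _ _) _; apply: lerD; last first.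
  by rewrite normrM mulrC ler_wpM2r.
have -> : e * W + 2 * B * (m%:R ^+ 2 * (Z^-1 * weighted_mismatches b N + m%:R * Z^-1))
    = Z^-1 * (e * \sum_(n < N) w n
              + 2 * B * (m%:R ^+ 2 * (weighted_mismatches b N + m%:R)))
  by rewrite /W; ring.
rewrite normrM gtr0_norm ?invr_gt0 // ler_pM2l ?invr_gt0 //.
exact: weighted_shift_sum_close fB close.
Qed.

Theorem weighted_shift_avg_cvg_cst (N : nat -> nat) (Z : nat -> R) (b : bool)
    (f : cantor_space -> R) :
  continuous f ->
  (\forall k \near \oo, 0 < Z k) ->
  (Z k)^-1 @[k --> \oo] --> 0 ->
  ((Z k)^-1 * \sum_(n < N k) w n) @[k --> \oo] --> (1 : R) ->
  ((Z k)^-1 * weighted_mismatches b (N k)) @[k --> \oo] --> 0 ->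
  ((Z k)^-1 * \sum_(n < N k) w n * f (shiftn n x)) @[k --> \oo] --> f (cst b).
Proof.
move=> cf Z_gt0 Zinv_cvg W_cvg D_cvg.
have [B fB] := continuous_bounded cf.
apply/cvgrPdist_le => eps eps_gt0.
have eps2_gt0 : 0 < eps / 2 by rewrite divr_gt0.
have [m close] := continuous_prefix_close (cst b) cf eps2_gt0.
pose W k := (Z k)^-1 * \sum_(n < N k) w n.
pose bound k := eps / 2 * W k
  + 2 * B * (m%:R ^+ 2 * ((Z k)^-1 * weighted_mismatches b (N k) + m%:R * (Z k)^-1))
  + B * `|W k - 1|.
have bound_cvg : bound k @[k --> \oo] --> eps / 2.
  have -> : eps / 2 = eps / 2 * 1 + 2 * B * (m%:R ^+ 2 * (0 + m%:R * 0))
      + B * `|1 - 1| by rewrite subrr normr0; ring.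
  apply: cvgD; first apply: cvgD.
  - exact: cvgMl_tmp.
  - by do 2 apply: cvgMl_tmp; apply: cvgD => //; apply: cvgMl_tmp.
  - by apply: cvgMl_tmp; apply: cvg_norm; apply: cvgB => //; exact: cvg_cst.
have /cvgrPdist_lt/(_ _ eps2_gt0) bound_near := bound_cvg.
near=> k.
have : `|eps / 2 - bound k| < eps / 2 by near: k.
rewrite ltr_norml => /andP[bound_lt _].
rewrite distrC; apply: le_trans (_ : bound k <= eps); last by lra.
by apply: weighted_shift_avg_close fB close; near: k.
Unshelve. all: by end_near.
Qed.

End weighted_shift_averages.

Lemma cvg0_le_harmonic (R : realType) (u : nat -> R) :
  (forall k, 0 <= u k <= harmonic k) -> u @ \oo --> 0.
Proof.
move=> u_bd; apply: (@squeeze_cvgr _ _ _ _ (fun=> 0) harmonic).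
- exact: nearW.
- exact: cvg_cst.
- exact: cvg_harmonic.
Qed.

Lemma emp_int_cvg_cst (R : realType) (x : cantor_space) (b : bool)
    (N : nat -> nat) (f : cantor_space -> R) :
  continuous f -> (forall k, k < N k)%N ->
  (forall k, k.+1 * \sum_(n < N k) (x n != b) <= N k)%N ->
  emp_int x (N k) f @[k --> \oo] --> f (cst b).
Proof.
move=> cf N_gt N_sparse.
have N_gt0 k : 0 < (N k)%:R :> R by rewrite ltr0n (leq_ltn_trans _ (N_gt k)).
have Ninv_le k : (N k)%:R^-1 <= harmonic k :> R.
  by rewrite /= lef_pV2 ?posrE // ler_nat.
rewrite (eq_cvg _ _ (g := fun k => (N k)%:R^-1 *
  \sum_(n < N k) (fun=> 1 : R) n * f (shiftn n x))); last first.
  by move=> k; rewrite /emp_int; congr (_ * _); apply: eq_bigr => n _; rewrite mul1r.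
apply: (@weighted_shift_avg_cvg_cst R x (fun=> 1) _ _ _ N (fun k => (N k)%:R)) => //.
- by move=> i n; rewrite mulr1 ler1n.
- exact: nearW.
- by apply: cvg0_le_harmonic => k; rewrite invr_ge0 ler0n Ninv_le.
- apply: cvg_near_cst; apply: nearW => k.
  by rewrite sumr_const card_ord mulVf ?gt_eqF.
apply: cvg0_le_harmonic => k; rewrite /weighted_mismatches.
under eq_bigr do rewrite mul1r.
rewrite -natr_sum mulr_ge0 ?invr_ge0 ?ler0n //=.
rewrite ler_pdivrMl // ler_pdivlMr ?ltr0n // -natrM ler_nat mulnC.
exact: N_sparse.
Qed.

Section logarithmic_averages.
Variable R : realType.

Lemma harmonic_shift i n : harmonic n <= i.+1%:R * harmonic (i + n) :> R.
Proof.
rewrite /= -div1r ler_pdivrMr ?ltr0n // mulrAC ler_pdivlMr ?ltr0n // mul1r.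
by rewrite -natrM ler_nat; nia.
Qed.

Lemma ln_succ_sub_le n : ln n.+2%:R - ln n.+1%:R <= harmonic n :> R.
Proof.
have n1_gt0 : 0 < n.+1%:R :> R by rewrite ltr0n.
have -> : n.+2%:R = n.+1%:R * (1 + harmonic n) :> R.
  by rewrite /= mulrDr mulr1 mulfV ?gt_eqF // -natr1.
have h1_gt0 : 0 < 1 + harmonic n :> R by rewrite ltr_wpDr ?harmonic_ge0.
rewrite lnM ?posrE // addrAC subrr add0r le_ln1Dx //.
by apply: lt_le_trans (harmonic_ge0 n); rewrite ltrN10.
Qed.

Lemma harmonic_le_ln_succ_sub n : harmonic n.+1 <= ln n.+2%:R - ln n.+1%:R :> R.
Proof.
have n2_gt0 : 0 < n.+2%:R :> R by rewrite ltr0n.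
have h_lt1 : harmonic n.+1 < 1 :> R by rewrite /= invf_lt1 // ltr1n.
have -> : n.+1%:R = n.+2%:R * (1 - harmonic n.+1) :> R.
  by rewrite /= mulrBr mulr1 mulfV ?gt_eqF // -[n.+2]addn1 natrD addrK.
rewrite lnM ?posrE ?subr_gt0 // opprD addrA subrr sub0r lerNr.
by rewrite le_ln1Dx // ltrN2.
Qed.

Lemma ln_le_sum_harmonic N : ln N.+1%:R <= \sum_(n < N) harmonic n :> R.
Proof.
elim: N => [|N IH]; first by rewrite ln1 big_ord0.
rewrite big_ord_recr; apply: le_trans (lerD IH (ln_succ_sub_le N)).
by rewrite addrC subrK.
Qed.

Lemma sum_harmonic_le_ln N : \sum_(n < N.+1) harmonic n <= 1 + ln N.+1%:R :> R.
Proof.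
elim: N => [|N IH]; first by rewrite big_ord1 ln1 /= invr1 addr0.
rewrite big_ord_recr; apply: le_trans (lerD IH (harmonic_le_ln_succ_sub N)) _.
by rewrite -addrA subrKC.
Qed.

Lemma cvg_inv_ln : (ln k%:R)^-1 @[k --> \oo] --> (0 : R).
Proof.
apply/cvgr0Pnorm_le => eps eps_gt0; near=> k.
have k_ge : expR eps^-1 <= k%:R :> R by near: k; exact: nbhs_infty_ger.
have ln_ge : eps^-1 <= ln k%:R.
  by rewrite -[eps^-1]expRK ler_ln ?posrE ?expR_gt0 ?(lt_le_trans (expR_gt0 _) k_ge).
have ln_gt0 : 0 < ln k%:R :> R by apply: (lt_le_trans _ ln_ge); rewrite invr_gt0.
rewrite ger0_norm ?invr_ge0 ?(ltW ln_gt0) //.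
by rewrite -[eps]invrK lef_pV2 ?posrE ?invr_gt0.
Unshelve. all: by end_near.
Qed.

Lemma cvg_sum_harmonic_ln :
  ((ln k%:R)^-1 * \sum_(n < k) harmonic n) @[k --> \oo] --> (1 : R).
Proof.
apply: (@squeeze_cvgr _ _ _ _ (fun=> 1) (fun k => 1 + (ln k%:R)^-1)).
- near=> k.
  have k_gt1 : (1 < k)%N by near: k; exact: nbhs_infty_gt.
  have ln_gt0 : 0 < ln k%:R :> R by rewrite ln_gt0 ?ltr1n.
  rewrite mulrC ler_pdivlMr // mul1r ler_pdivrMr // mulrDl mul1r mulVf ?gt_eqF //.
  apply/andP; split.
    apply: (le_trans _ (ln_le_sum_harmonic k)).
    by rewrite ler_ln ?posrE ?ltr0n ?ler_nat // ltnW.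
  by rewrite addrC; have := sum_harmonic_le_ln k.-1; rewrite prednK // ltnW.
- exact: cvg_cst.
- rewrite -[X in _ --> X]addr0; apply: cvgD (cvg_cst _) cvg_inv_ln.
Unshelve. all: by end_near.
Qed.

Lemma emp_log_int_cvg_cst (x : cantor_space) (b : bool) (f : cantor_space -> R) :
  continuous f ->
  ((ln k%:R)^-1 * weighted_mismatches x (@harmonic R) b k) @[k --> \oo] --> 0 ->
  emp_log_int x k f @[k --> \oo] --> f (cst b).
Proof.
move=> cf D_cvg.
apply: (@weighted_shift_avg_cvg_cst R x harmonic _ _ _ id (fun k => ln k%:R)) => //.
- exact: harmonic_ge0.
- by move=> n; rewrite /= invf_le1 ?ler1n ?ltr0n.
- exact: harmonic_shift.
- near=> k; apply: ln_gt0; rewrite ltr1n; near: k; exact: nbhs_infty_gt.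
- exact: cvg_inv_ln.
- exact: cvg_sum_harmonic_ln.
Unshelve. all: by end_near.
Qed.

End logarithmic_averages.

Definition block_start (k : nat) : nat := (2 ^ (k ^ 3))%N.

(* Searching j among 0..n suffices because j < block_start j. *)
Definition blocks : cantor_space := fun n =>
  has (fun j => block_start j <= n < j * block_start j)%N (iota 0 n.+1).

Lemma block_start_gt0 k : (0 < block_start k)%N.
Proof. by rewrite expn_gt0. Qed.

Lemma block_start_le j k : (j <= k)%N -> (block_start j <= block_start k)%N.
Proof. by move=> jk; rewrite leq_pexp2l // leq_exp2r. Qed.

Lemma block_start_gtn k : (k < block_start k)%N.
Proof.
apply: leq_trans (ltn_expl k (isT : 1 < 2)%N) _.
by rewrite leq_pexp2l //; case: k => // k; rewrite expnS; nia.
Qed.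

Lemma block_start_growth k : (k.+1 * (k.+1 * block_start k) <= block_start k.+1)%N.
Proof.
have e : (k ^ 3 + (k + k) <= k.+1 ^ 3)%N by rewrite !expnS expn0; nia.
apply: leq_trans (leq_pexp2l (isT : 0 < 2)%N e).
have kY := ltn_expl k (isT : 1 < 2)%N.
rewrite !expnD mulnA mulnC.
exact: leq_mul (leqnn _) (leq_mul kY kY).
Qed.

Lemma block_start_succ_incr : {homo (fun k => block_start k.+1) : m n / (m < n)%N}.
Proof. by move=> m n mn; rewrite ltn_exp2l // ltn_exp2r. Qed.

Lemma block_end_incr :
  {homo (fun k => k.+1 * block_start k.+1)%N : m n / (m < n)%N}.
Proof. by move=> m n mn; apply: ltn_mul; rewrite ?ltnS ?block_start_succ_incr. Qed.

Lemma blocksP n :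
  reflect (exists j, block_start j <= n < j * block_start j)%N (blocks n).
Proof.
apply: (iffP hasP) => [[j _ jn]|[j jn]]; first by exists j.
exists j => //; rewrite mem_iota add0n ltnS.
by case/andP: jn => /(leq_trans (ltnW (block_start_gtn j))).
Qed.

Lemma sum_ltn_indicator K A : (\sum_(n < K) (n < A) = minn K A)%N.
Proof.
elim: K => [|K IH]; first by rewrite big_ord0 min0n.
by rewrite big_ord_recr /= IH; case: ltnP => KA; lia.
Qed.

Lemma sum_bool_le (b : nat -> bool) K A :
  (forall n, (n < K)%N -> b n -> (n < A)%N) -> (\sum_(n < K) b n <= A)%N.
Proof.
move=> bA; apply: leq_trans (geq_minr K A); rewrite -sum_ltn_indicator.
apply: leq_sum => n _.
by case: (boolP (b n)) => // /(bA n (ltn_ord n)) ->.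
Qed.

Lemma ones_before_block k :
  (\sum_(n < block_start k.+1) blocks n <= k * block_start k)%N.
Proof.
apply: sum_bool_le => n n_lt /blocksP[j /andP[jn nj]].
have jk : (j <= k)%N.
  rewrite -ltnS ltnNge; apply/negP => /block_start_le kj.
  by move: (leq_trans kj jn); rewrite leqNgt n_lt.
exact: leq_trans nj (leq_mul jk (block_start_le jk)).
Qed.

Lemma zeros_in_block k :
  (\sum_(n < k.+1 * block_start k.+1) ~~ blocks n <= block_start k.+1)%N.
Proof.
apply: (@sum_bool_le (fun n => ~~ blocks n)) => n n_lt.
apply: contraR; rewrite -leqNgt => n_ge.
by apply/blocksP; exists k.+1; rewrite n_ge.
Qed.

Section blocks_averages.
Variables (R : realType) (f : cantor_space -> R).
Hypothesis cf : continuous f.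

Lemma emp_int_blocks_cvg0 :
  emp_int blocks (block_start k.+1) f @[k --> \oo] --> f (cst false).
Proof.
apply: emp_int_cvg_cst => // k.
  exact: ltn_trans (ltnSn k) (block_start_gtn k.+1).
have -> : (\sum_(n < block_start k.+1) (blocks n != false)
    = \sum_(n < block_start k.+1) blocks n)%N.
  by apply: eq_bigr => n _; case: (blocks n).
apply: leq_trans (leq_mul (leqnn _) (ones_before_block k)) _.
apply: leq_trans (block_start_growth k); rewrite leq_mul2l leq_mul2r.
by rewrite leqnSn !orbT.
Qed.

Lemma emp_int_blocks_cvg1 :
  emp_int blocks (k.+1 * block_start k.+1) f @[k --> \oo] --> f (cst true).
Proof.
apply: emp_int_cvg_cst => // k.
  exact: leq_pmulr _ (block_start_gt0 _).
have -> : (\sum_(n < k.+1 * block_start k.+1) (blocks n != true)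
    = \sum_(n < k.+1 * block_start k.+1) ~~ blocks n)%N.
  by apply: eq_bigr => n _; case: (blocks n).
by rewrite leq_mul2l zeros_in_block orbT.
Qed.

End blocks_averages.

Lemma block_index N J0 : (block_start J0 <= N)%N ->
  exists2 J, (J0 <= J)%N & (block_start J <= N < block_start J.+1)%N.
Proof.
move=> J0N.
have N_bound j : (block_start j <= N)%N -> (j <= N)%N.
  by move/(leq_trans (ltnW (block_start_gtn j))).
case: (ex_maxnP (ex_intro _ J0 J0N) N_bound) => J JN J_max.
exists J; first exact: J_max.
by rewrite JN ltnNge; apply/negP => /J_max; rewrite ltnn.
Qed.

Lemma ln_block_start (R : realType) J :
  ln (block_start J)%:R = (J ^ 3)%:R * ln 2 :> R.
Proof. by rewrite /block_start natrX lnXn ?ltr0n // mulr_natl. Qed.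

Lemma harmonic_mismatches_blocks_le (R : realType) K J :
  (K <= block_start J.+1)%N ->
  weighted_mismatches blocks (@harmonic R) false K <= (J.+1 * J)%:R.
Proof.
move=> KJ.
apply: le_trans (_ : _ <= \sum_(n < K) \sum_(j < J.+1)
  (block_start j)%:R^-1 * (n < j * block_start j)%N%:R) _.
  apply: ler_sum => n _.
  have sum_ge0 : 0 <= \sum_(j < J.+1)
      (block_start j)%:R^-1 * (n < j * block_start j)%N%:R :> R.
    by apply: sumr_ge0 => j _; rewrite mulr_ge0 ?invr_ge0 ?ler0n.
  case/boolP: (blocks n) => [/blocksP[j /andP[jn nj]]|_]; last by rewrite mulr0.
  have jJ : (j < J.+1)%N.
    rewrite ltnNge; apply/negP => /block_start_le Jj.
    by move: (leq_trans Jj jn); rewrite leqNgt (leq_trans (ltn_ord n) KJ).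
  rewrite (bigD1 (Ordinal jJ)) //= nj mulr1 mulr1n.
  apply: le_trans (ler_wpDr _ (lexx _)).
    by rewrite mulr1 lef_pV2 ?posrE ?ltr0n ?block_start_gt0 // ler_nat leqW.
  by apply: sumr_ge0 => i _; rewrite mulr_ge0 ?invr_ge0 ?ler0n.
rewrite exchange_big /=.
apply: le_trans (_ : _ <= \sum_(j < J.+1) (J%:R : R)) _; last first.
  by rewrite sumr_const card_ord natrM mulr_natl.
apply: ler_sum => j _; rewrite -mulr_sumr -natr_sum sum_ltn_indicator.
have aj_gt0 : 0 < (block_start j)%:R :> R by rewrite ltr0n block_start_gt0.
apply: le_trans (_ : (block_start j)%:R^-1 * (j * block_start j)%:R <= _).
  by rewrite ler_pM2l ?invr_gt0 // ler_nat geq_minr.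
by rewrite natrM mulrCA mulVf ?gt_eqF // mulr1 ler_nat -ltnS.
Qed.

Lemma cvg_log_density_blocks (R : realType) :
  ((ln k%:R)^-1 * weighted_mismatches blocks (@harmonic R) false k)
    @[k --> \oo] --> 0.
Proof.
apply/cvgr0Pnorm_le => eps eps_gt0.
have ln2_gt0 : 0 < ln 2 :> R by rewrite ln_gt0 ?ltr1n.
pose J0 := (Num.Def.truncn (2 / (eps * ln 2))).+1.
near=> k.
have [J J0J /andP[Jk kJ]] : exists2 J, (J0 <= J)%N &
    (block_start J <= k < block_start J.+1)%N.
  by apply: block_index; near: k; exact: nbhs_infty_ge.
have J_gt0 : (0 < J)%N := leq_trans (ltn0Sn _) J0J.
have ln_ge : (J ^ 3)%:R * ln 2 <= ln k%:R :> R.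
  by rewrite -ln_block_start ler_ln ?posrE ?ltr0n ?block_start_gt0 ?ler_nat //;
    apply: leq_trans Jk; rewrite block_start_gt0.
have ln_gt0 : 0 < ln k%:R :> R.
  by apply: lt_le_trans ln_ge; rewrite mulr_gt0 // ltr0n expn_gt0 J_gt0.
have J_big : 2 <= eps * ln 2 * J%:R.
  rewrite mulrC -ler_pdivrMr ?mulr_gt0 //.
  by apply/ltW/(lt_le_trans (truncnS_gt _)); rewrite ler_nat.
have D_ge0 : 0 <= weighted_mismatches blocks (@harmonic R) false k.
  by apply: sumr_ge0 => n _; rewrite mulr_ge0 ?harmonic_ge0.
rewrite ger0_norm ?mulr_ge0 ?invr_ge0 ?(ltW ln_gt0) //.
rewrite ler_pdivrMl //.
apply: le_trans (harmonic_mismatches_blocks_le _ (ltnW kJ)) _.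
apply: le_trans (_ : (2 * J ^ 2)%:R <= _).
  by rewrite ler_nat; nia.
apply: le_trans (_ : eps * ln 2 * J%:R * (J ^ 2)%:R <= _).
  by rewrite natrM ler_wpM2r ?ler0n.
rewrite [ln _ * _]mulrC -!mulrA ler_wpM2l ?(ltW eps_gt0) //.
by apply: le_trans ln_ge; rewrite -natrM -expnS mulrC.
Unshelve. all: by end_near.
Qed.

Lemma emp_log_int_blocks_cvg (R : realType) (f : cantor_space -> R) :
  continuous f -> emp_log_int blocks k f @[k --> \oo] --> f (cst false).
Proof. by move=> cf; apply: emp_log_int_cvg_cst cf (@cvg_log_density_blocks R). Qed.

Lemma Vlog_blocks_integral (R : realType) (nu : Prob R) (f : cantor_space -> R) :
  Vlog blocks nu -> continuous f ->
  (\int[nu]_(w in [set: Omega]) (f w)%:E = (f (cst false))%:E)%E.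
Proof.
case=> N [N_incr [_ nu_lim]] cf.
have log_cvg := cvg_comp _ _ (increasing_cvgn N_incr) (emp_log_int_blocks_cvg cf).
exact: cvg_unique (nu_lim f cf) (cvg_EFin_seq log_cvg).
Qed.

Theorem proposition4p3 (R : realType) :
  exists x : cantor_space, @Vlog R x `<` @V R x.
Proof.
exists blocks; split.
  move=> nu nu_Vlog; exists (fun k => block_start k.+1).
  split; [exact: block_start_succ_incr | split; first exact: block_start_gt0].
  move=> f cf; rewrite (Vlog_blocks_integral nu_Vlog cf).
  exact/cvg_EFin_seq/emp_int_blocks_cvg0.
move=> V_sub_Vlog.
have V_delta1 : V blocks (dirac_prob R (cst true)).
  exists (fun k => k.+1 * block_start k.+1)%N.
  split; [exact: block_end_incr | split; first by rewrite muln_gt0 block_start_gt0].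
  exact/weak_star_cvg_dirac/emp_int_blocks_cvg1.
have := Vlog_blocks_integral (V_sub_Vlog _ V_delta1) (@continuous_first_digit R).
rewrite integral_dirac_continuous; last exact: continuous_first_digit.
by case=> /eqP; rewrite oner_eq0.
Qed.
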